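(* Let $C$ be a configuration of the (substitution-based) Krivine Abstract Machine (KAM) and let $[\![\cdot]\!]$ be the translation of KAM configurations into HOcore described in the context. In the forward direction, if $C \to^{*} C'$, then $[\![C]\!] \Rightarrow [\![C']\!]$ (a sequence of zero or more $\tau$-transitions). In the backward direction, if $[\![C]\!] \Rightarrow P$, then there exists a configuration $C'$ such that $C \to^{*} C'$ and either (i) $P = [\![C']\!]$, or (ii) there exists $P'$ such that $P \xrightarrow{\tau} P' = [\![C']\!]$, or (iii) $C' = \langle \lambda x.t, [] \rangle$ for some $x,t$ and $P = hd(x).[\![t]\!] \parallel \overline{b}\langle 0\rangle$.
   Context: HOcore processes are given by $P,Q ::= a(x).P \mid \overline{a}\langle P\rangle \mid P \parallel Q \mid x \mid 0$, where $a,b,\dots$ are channel names and $x,y,\dots$ are process variables; $a(x).P$ binds $x$ in $P$; parallel composition is associative and commutative with unit $0$; processes are considered up to $\alpha$-conversion. The labelled transition system has labels $\tau$, $\overline{a}\langle P\rangle$ and $a(P)$, with rules: $\overline{a}\langle P\rangle \xrightarrow{\overline{a}\langle P\rangle} 0$; $a(x).Q \xrightarrow{a(P)} Q\{P/x\}$ (capture-avoiding substitution); if $P \xrightarrow{l} P'$ then $P\parallel Q \xrightarrow{l} P'\parallel Q$ and $Q \parallel P \xrightarrow{l} Q \parallel P'$; if $P \xrightarrow{\overline{a}\langle R\rangle} P'$ and $Q \xrightarrow{a(R)} Q'$ then $P \parallel Q \xrightarrow{\tau} P'\parallel Q'$ and $Q\parallel P \xrightarrow{\tau} Q' \parallel P'$.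 $\Rightarrow$ denotes the reflexive transitive closure of $\xrightarrow{\tau}$. KAM: terms $t,s ::= x \mid t\,s \mid \lambda x.t$; stacks $\pi ::= t :: \pi \mid []$; configurations $C ::= \langle t, \pi\rangle$, where all terms are closed. Transitions: $\langle t\,s, \pi\rangle \to \langle t, s :: \pi\rangle$ and $\langle \lambda x.t, s::\pi\rangle \to \langle t\{s/x\}, \pi\rangle$. $\to^*$ is the reflexive transitive closure. Translation (with $c, hd, b$ fixed channel names, $\lambda$-term variables translated as HOcore process variables, and $p$ a variable not occurring in translated entities): $[\![[]]\!] = \overline{b}\langle 0\rangle$; $[\![t::\pi]\!] = \overline{hd}\langle [\![t]\!]\rangle \parallel \overline{c}\langle [\![\pi]\!]\rangle$; $[\![\langle t,\pi\rangle]\!] = [\![t]\!] \parallel \overline{c}\langle[\![\pi]\!]\rangle$; $[\![t\,s]\!] = c(p).([\![t]\!] \parallel \overline{c}\langle \overline{hd}\langle[\![s]\!]\rangle \parallel \overline{c}\langle p\rangle\rangle)$; $[\![\lambda x.t]\!] = c(p).(hd(x).[\![t]\!] \parallel p)$; $[\![x]\!] = x$. *)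

(* Bound variables (of HOcore processes and of lambda
   terms) are represented with de Bruijn indices, so processes and terms
   are automatically identified up to alpha-conversion. *)
From Stdlib Require Import Arith List Relations.
Import ListNotations.

Definition chan := nat.

Inductive proc : Type :=
| PVar : nat -> proc
| PIn  : chan -> proc -> proc      (* a(x).P, binds index 0 in P *)
| POut : chan -> proc -> proc
| PPar : proc -> proc -> proc
| PNil : proc.

Fixpoint plift (k : nat) (P : proc) : proc :=
  match P with
  | PVar n => PVar (if k <=? n then S n else n)
  | PIn a Q => PIn a (plift (S k) Q)
  | POut a Q => POut a (plift k Q)
  | PPar Q R => PPar (plift k Q) (plift k R)
  | PNil => PNil
  end.

(* psubst k R P : capture-avoiding substitution of R for variable k in P
   (variables above k are decremented, as the binder disappears) *)
Fixpoint psubst (k : nat) (R : proc) (P : proc) : proc :=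
  match P with
  | PVar n =>
      if n <? k then PVar n
      else if n =? k then Nat.iter k (plift 0) R
      else PVar (pred n)
  | PIn a Q => PIn a (psubst (S k) R Q)
  | POut a Q => POut a (psubst k R Q)
  | PPar Q1 Q2 => PPar (psubst k R Q1) (psubst k R Q2)
  | PNil => PNil
  end.

(* Q{P/x} where x is the variable bound by the input prefix *)
Definition inst (Q P : proc) : proc := psubst 0 P Q.

Inductive scong : proc -> proc -> Prop :=
| sc_refl  : forall P, scong P P
| sc_sym   : forall P Q, scong P Q -> scong Q P
| sc_trans : forall P Q R, scong P Q -> scong Q R -> scong P R
| sc_in    : forall a P Q, scong P Q -> scong (PIn a P) (PIn a Q)
| sc_out   : forall a P Q, scong P Q -> scong (POut a P) (POut a Q)
| sc_par   : forall P P' Q Q', scong P P' -> scong Q Q' ->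
               scong (PPar P Q) (PPar P' Q')
| sc_assoc : forall P Q R, scong (PPar P (PPar Q R)) (PPar (PPar P Q) R)
| sc_comm  : forall P Q, scong (PPar P Q) (PPar Q P)
| sc_unit  : forall P, scong (PPar P PNil) P.

Inductive label : Type :=
| LTau : label
| LOut : chan -> proc -> label
| LIn  : chan -> proc -> label.

Inductive lts : proc -> label -> proc -> Prop :=
| lts_out : forall a P, lts (POut a P) (LOut a P) PNil
| lts_in  : forall a Q P, lts (PIn a Q) (LIn a P) (inst Q P)
| lts_parL : forall P Q l P', lts P l P' -> lts (PPar P Q) l (PPar P' Q)
| lts_parR : forall P Q l P', lts P l P' -> lts (PPar Q P) l (PPar Q P')
| lts_comL : forall P Q R a P' Q', lts P (LOut a R) P' -> lts Q (LIn a R) Q' ->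
               lts (PPar P Q) LTau (PPar P' Q')
| lts_comR : forall P Q R a P' Q', lts P (LOut a R) P' -> lts Q (LIn a R) Q' ->
               lts (PPar Q P) LTau (PPar Q' P').

Definition tau_step (P Q : proc) : Prop :=
  exists P0 Q0, scong P P0 /\ lts P0 LTau Q0 /\ scong Q0 Q.

Definition tau_star : proc -> proc -> Prop :=
  clos_refl_trans proc (fun P Q => scong P Q \/ tau_step P Q).

Inductive term : Type :=
| TVar : nat -> term
| TApp : term -> term -> term
| TLam : term -> term.

Fixpoint tlift (k : nat) (t : term) : term :=
  match t with
  | TVar n => TVar (if k <=? n then S n else n)
  | TApp t1 t2 => TApp (tlift k t1) (tlift k t2)
  | TLam t1 => TLam (tlift (S k) t1)
  end.

Fixpoint tsubst (k : nat) (s : term) (t : term) : term :=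
  match t with
  | TVar n =>
      if n <? k then TVar n
      else if n =? k then Nat.iter k (tlift 0) s
      else TVar (pred n)
  | TApp t1 t2 => TApp (tsubst k s t1) (tsubst k s t2)
  | TLam t1 => TLam (tsubst (S k) s t1)
  end.

Fixpoint closed_at (k : nat) (t : term) : Prop :=
  match t with
  | TVar n => n < k
  | TApp t1 t2 => closed_at k t1 /\ closed_at k t2
  | TLam t1 => closed_at (S k) t1
  end.

Definition closed (t : term) : Prop := closed_at 0 t.

Definition stack := list term.

Definition config : Type := (term * stack)%type.

Definition closed_config (C : config) : Prop :=
  closed (fst C) /\ Forall closed (snd C).

Inductive kam_step : config -> config -> Prop :=
| kam_push : forall t s pi, kam_step (TApp t s, pi) (t, s :: pi)
| kam_grab : forall t s pi, kam_step (TLam t, s :: pi) (tsubst 0 s t, pi).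

Definition kam_star : config -> config -> Prop :=
  clos_refl_trans config kam_step.

Definition ch_c : chan := 0.
Definition ch_hd : chan := 1.
Definition ch_b : chan := 2.

(* [[x]] = x
   [[t s]] = c(p).([[t]] || c<ch_hd<[[s]]> || c<p>>)
   [[\x.t]] = c(p).(ch_hd(x).[[t]] || p)
   with p fresh: in de Bruijn form p is index 0 under the c-binder, and the
   translated subterms are lifted so as not to be captured by it. *)
Fixpoint tr (t : term) : proc :=
  match t with
  | TVar n => PVar n
  | TApp t1 t2 =>
      PIn ch_c (PPar (plift 0 (tr t1))
                  (POut ch_c (PPar (POut ch_hd (plift 0 (tr t2))) (POut ch_c (PVar 0)))))
  | TLam t1 => PIn ch_c (PPar (PIn ch_hd (plift 1 (tr t1))) (PVar 0))
  end.

Fixpoint tr_stack (pi : stack) : proc :=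
  match pi with
  | [] => POut ch_b PNil
  | t :: pi' => PPar (POut ch_hd (tr t)) (POut ch_c (tr_stack pi'))
  end.

Definition tr_config (C : config) : proc :=
  PPar (tr (fst C)) (POut ch_c (tr_stack (snd C))).

(* Up to structural congruence, every process reachable from [[C]] is either
   the translation of a configuration reachable from C, or the state
   hd(x).[[t]] || [[pi]] of an abstraction that has just received its stack.
   Structural congruence preserves the multiset of top-level prefixed
   components (up to congruence under the prefixes), so the tau-steps of such a
   process can be read off its components: there is exactly one redex, and
   firing it either simulates a KAM step (push for an application, grab when
   hd meets the head of the stack) or moves an abstraction into its
   intermediate state. With an empty stack that state is stuck: case (iii). *)

From Stdlib Require Import List.
Import ListNotations.
From Stdlib Require Import Arith Lia Relations Permutation.

#[local] Hint Constructors scong : core.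

Ltac nat_cases :=
  repeat match goal with
  | |- context [?a <=? ?b] => destruct (Nat.leb_spec a b)
  | |- context [?a <? ?b] => destruct (Nat.ltb_spec a b)
  | |- context [?a =? ?b] => destruct (Nat.eqb_spec a b)
  end.

Lemma plift_plift_comm P j k : j <= k ->
  plift (S k) (plift j P) = plift j (plift k P).
Proof.
  revert j k; induction P; intros j k Hjk; cbn [plift]; f_equal; auto with arith.
  f_equal; nat_cases; lia.
Qed.

Lemma plift_iter_plift0 n j R : j <= n ->
  plift j (Nat.iter n (plift 0) R) = plift 0 (Nat.iter n (plift 0) R).
Proof.
  revert j; induction n as [|n IHn]; intros [|j] Hj; cbn [Nat.iter]; try reflexivity.
  - lia.
  - simpl. rewrite (plift_plift_comm _ 0 j), IHn by lia. reflexivity.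
Qed.

Lemma psubst_plift_comm P j k R : j <= k ->
  psubst (S k) R (plift j P) = plift j (psubst k R P).
Proof.
  revert j k; induction P; intros j k Hjk; cbn [plift psubst]; f_equal; auto with arith.
  nat_cases; cbn [plift]; nat_cases; try (f_equal; lia); try lia.
  subst. symmetry. apply plift_iter_plift0. lia.
Qed.

Lemma psubst_plift_cancel P k R : psubst k R (plift k P) = P.
Proof.
  revert k; induction P; intros k; cbn [plift psubst]; f_equal; auto.
  nat_cases; f_equal; lia.
Qed.

Lemma tr_tlift t k : tr (tlift k t) = plift k (tr t).
Proof.
  revert k; induction t as [n|t1 IH1 t2 IH2|t IH]; intros k; simpl.
  - reflexivity.
  - rewrite IH1, IH2, !(plift_plift_comm _ 0 k) by lia. reflexivity.
  - rewrite IH, (plift_plift_comm _ 1 (S k)) by lia. reflexivity.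
Qed.

Lemma tr_iter_tlift0 n s :
  tr (Nat.iter n (tlift 0) s) = Nat.iter n (plift 0) (tr s).
Proof. induction n as [|n IHn]; simpl; rewrite ?tr_tlift, ?IHn; reflexivity. Qed.

Lemma tr_tsubst t k s : tr (tsubst k s t) = psubst k (tr s) (tr t).
Proof.
  revert k; induction t as [n|t1 IH1 t2 IH2|t IH]; intros k; simpl.
  - cbn [psubst]. destruct (n <? k); [|destruct (n =? k)]; auto using tr_iter_tlift0.
  - rewrite IH1, IH2, !(psubst_plift_comm _ 0 k) by lia. reflexivity.
  - rewrite IH, (psubst_plift_comm _ 1 (S k)) by lia. reflexivity.
Qed.

Fixpoint flat (P : proc) : list proc :=
  match P with
  | PPar P Q => flat P ++ flat Q
  | PNil => []
  | P => [P]
  end.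

Fixpoint par_list (l : list proc) : proc :=
  match l with
  | [] => PNil
  | P :: l => PPar P (par_list l)
  end.

Lemma par_list_app l1 l2 :
  scong (par_list (l1 ++ l2)) (PPar (par_list l1) (par_list l2)).
Proof.
  induction l1 as [|P l1 IH]; simpl.
  - eapply sc_trans; [apply sc_sym, sc_unit | apply sc_comm].
  - eapply sc_trans; [apply sc_par; [apply sc_refl | apply IH] | apply sc_assoc].
Qed.

Lemma scong_par_list_flat P : scong P (par_list (flat P)).
Proof.
  induction P; simpl; try apply sc_refl; try (apply sc_sym, sc_unit).
  eapply sc_trans; [apply sc_par; eassumption | apply sc_sym, par_list_app].
Qed.

Lemma par_list_perm l l' : Permutation l l' -> scong (par_list l) (par_list l').
Proof.
  induction 1; simpl.
  - apply sc_refl.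
  - apply sc_par; [apply sc_refl | assumption].
  - eapply sc_trans; [apply sc_assoc |].
    eapply sc_trans; [apply sc_par; [apply sc_comm | apply sc_refl] | apply sc_sym, sc_assoc].
  - eapply sc_trans; eassumption.
Qed.

Lemma perm_flat_scong P Q : Permutation (flat P) (flat Q) -> scong P Q.
Proof.
  intros H. eapply sc_trans; [apply scong_par_list_flat |].
  eapply sc_trans; [apply par_list_perm, H | apply sc_sym, scong_par_list_flat].
Qed.

Inductive comp_eq : proc -> proc -> Prop :=
| comp_eq_refl P : comp_eq P P
| comp_eq_in a P Q : scong P Q -> comp_eq (PIn a P) (PIn a Q)
| comp_eq_out a P Q : scong P Q -> comp_eq (POut a P) (POut a Q).

Lemma comp_eq_sym P Q : comp_eq P Q -> comp_eq Q P.
Proof. destruct 1; constructor; apply sc_sym; assumption. Qed.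

Lemma comp_eq_trans P Q R : comp_eq P Q -> comp_eq Q R -> comp_eq P R.
Proof.
  destruct 1; inversion 1; subst; constructor; eauto using sc_trans.
Qed.

Lemma comp_eq_scong P Q : comp_eq P Q -> scong P Q.
Proof. destruct 1; auto. Qed.

Lemma par_list_comp_eq l l' : Forall2 comp_eq l l' -> scong (par_list l) (par_list l').
Proof. induction 1; simpl; auto using comp_eq_scong. Qed.

Definition comps_equiv (l1 l2 : list proc) : Prop :=
  exists m, Forall2 comp_eq l1 m /\ Permutation m l2.

Lemma Forall2_comp_eq_refl l : Forall2 comp_eq l l.
Proof. induction l; constructor; auto using comp_eq_refl. Qed.

Lemma comps_equiv_refl l : comps_equiv l l.
Proof. exists l; auto using Forall2_comp_eq_refl. Qed.

Lemma comps_equiv_sym l1 l2 : comps_equiv l1 l2 -> comps_equiv l2 l1.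
Proof.
  intros (m & Hf & Hp).
  assert (Hf' : Forall2 comp_eq m l1)
    by (clear Hp; induction Hf; constructor; auto using comp_eq_sym).
  destruct (Permutation_Forall2 Hp Hf') as (m' & Hp' & Hf'').
  exists m'; split; [assumption | symmetry; assumption].
Qed.

Lemma comps_equiv_trans l1 l2 l3 :
  comps_equiv l1 l2 -> comps_equiv l2 l3 -> comps_equiv l1 l3.
Proof.
  intros (m1 & Hf1 & Hp1) (m2 & Hf2 & Hp2).
  destruct (Permutation_Forall2 (Permutation_sym Hp1) Hf2) as (m & Hp & Hf).
  exists m; split.
  - clear - Hf1 Hf. revert m Hf; induction Hf1; inversion 1; subst;
      constructor; eauto using comp_eq_trans.
  - rewrite <- Hp; assumption.
Qed.

Lemma scong_comps_equiv P Q : scong P Q -> comps_equiv (flat P) (flat Q).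
Proof.
  induction 1; simpl.
  - apply comps_equiv_refl.
  - apply comps_equiv_sym; assumption.
  - eapply comps_equiv_trans; eassumption.
  - exists [PIn a Q]; auto using comp_eq_in.
  - exists [POut a Q]; auto using comp_eq_out.
  - destruct IHscong1 as (m1 & Hf1 & Hp1), IHscong2 as (m2 & Hf2 & Hp2).
    exists (m1 ++ m2); auto using Forall2_app, Permutation_app.
  - rewrite app_assoc; apply comps_equiv_refl.
  - exists (flat P ++ flat Q); auto using Forall2_comp_eq_refl, Permutation_app_comm.
  - rewrite app_nil_r; apply comps_equiv_refl.
Qed.

Lemma plift_scong P Q k : scong P Q -> scong (plift k P) (plift k Q).
Proof.
  intros H; revert k; induction H; intros k; simpl; eauto.
Qed.

Lemma psubst_scong_l P Q k R : scong P Q -> scong (psubst k R P) (psubst k R Q).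
Proof.
  intros H; revert k; induction H; intros k; simpl; eauto.
Qed.

Lemma psubst_scong_r P k R R' : scong R R' -> scong (psubst k R P) (psubst k R' P).
Proof.
  intros HR; revert k; induction P; intros k; simpl; auto.
  destruct (n <? k); [|destruct (n =? k)]; auto.
  induction k; simpl; auto using plift_scong.
Qed.

Lemma inst_scong B B' R R' : scong B B' -> scong R R' -> scong (inst B R) (inst B' R').
Proof.
  intros HB HR. eapply sc_trans; [apply psubst_scong_l, HB | apply psubst_scong_r, HR].
Qed.

Inductive redex : label -> list proc -> proc -> Prop :=
| redex_out a R : redex (LOut a R) [POut a R] PNil
| redex_in a B R : redex (LIn a R) [PIn a B] (inst B R)
| redex_com a R B : redex LTau [POut a R; PIn a B] (inst B R).

Lemma lts_redex P l Q : lts P l Q ->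
  exists used res Rest, redex l used res /\
    Permutation (flat P) (used ++ flat Rest) /\ scong Q (PPar res Rest).
Proof.
  induction 1 as [a R | a B R | P Q l P' _ IH | P Q l P' _ IH
                 | P Q R a P' Q' _ IH1 _ IH2 | P Q R a P' Q' _ IH1 _ IH2].
  - exists [POut a R], PNil, PNil; split; [constructor | split; [reflexivity | auto]].
  - exists [PIn a B], (inst B R), PNil; split; [constructor | split; [reflexivity | auto]].
  - destruct IH as (used & res & Rest & Hr & Hp & Hs).
    exists used, res, (PPar Rest Q); split; [assumption | split]; simpl.
    + rewrite Hp, app_assoc; reflexivity.
    + eapply sc_trans; [apply sc_par; [apply Hs | apply sc_refl] | apply sc_sym, sc_assoc].
  - destruct IH as (used & res & Rest & Hr & Hp & Hs).
    exists used, res, (PPar Q Rest); split; [assumption | split]; simpl.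
    + rewrite Hp; apply Permutation_app_swap_app.
    + eapply sc_trans; [apply sc_par; [apply sc_refl | apply Hs] |].
      apply perm_flat_scong; simpl; apply Permutation_app_swap_app.
  - destruct IH1 as (used1 & res1 & Rest1 & Hr1 & Hp1 & Hs1).
    destruct IH2 as (used2 & res2 & Rest2 & Hr2 & Hp2 & Hs2).
    inversion Hr1; inversion Hr2; subst.
    exists [POut a R; PIn a B], (inst B R), (PPar Rest1 Rest2).
    split; [constructor | split]; simpl.
    + rewrite Hp1, Hp2; simpl. apply perm_skip; symmetry; apply Permutation_middle.
    + eapply sc_trans; [apply sc_par; eassumption |].
      apply perm_flat_scong; simpl; apply Permutation_app_swap_app.
  - destruct IH1 as (used1 & res1 & Rest1 & Hr1 & Hp1 & Hs1).
    destruct IH2 as (used2 & res2 & Rest2 & Hr2 & Hp2 & Hs2).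
    inversion Hr1; inversion Hr2; subst.
    exists [POut a R; PIn a B], (inst B R), (PPar Rest2 Rest1).
    split; [constructor | split]; simpl.
    + rewrite Hp1, Hp2; simpl.
      rewrite <- Permutation_middle. apply perm_swap.
    + eapply sc_trans; [apply sc_par; eassumption |].
      apply perm_flat_scong; simpl. rewrite app_assoc. reflexivity.
Qed.

Lemma tau_step_inv X Q : tau_step X Q ->
  exists a R B rest, Permutation (flat X) (POut a R :: PIn a B :: rest) /\
    scong Q (PPar (inst B R) (par_list rest)).
Proof.
  intros (P0 & Q0 & HX & Hl & HQ).
  destruct (lts_redex _ _ _ Hl) as (used & res & Rest & Hr & Hp & Hs).
  inversion Hr as [| | a R B]; subst.
  destruct (scong_comps_equiv _ _ (sc_sym _ _ HX)) as (m & Hf & Hm).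
  destruct (Permutation_Forall2 Hp Hf) as (m' & Hm' & Hf').
  inversion Hf' as [| o o' l1 l1' Ho Hf2]; subst.
  inversion Hf2 as [| i i' l2 rest Hi Hrest]; subst.
  assert (exists R', o' = POut a R' /\ scong R R') as (R' & -> & HR)
    by (inversion Ho; eauto).
  assert (exists B', i' = PIn a B' /\ scong B B') as (B' & -> & HB)
    by (inversion Hi; eauto).
  exists a, R', B', rest; split.
  - rewrite <- Hm, Hm'; reflexivity.
  - eapply sc_trans; [apply sc_sym, HQ |].
    eapply sc_trans; [apply Hs |].
    apply sc_par; [apply inst_scong; assumption |].
    eapply sc_trans; [apply scong_par_list_flat | apply par_list_comp_eq, Hrest].
Qed.

Lemma tau_step_scong P P' Q' Q :
  scong P P' -> tau_step P' Q' -> scong Q' Q -> tau_step P Q.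
Proof.
  intros HP (P0 & Q0 & H1 & Hl & H2) HQ. exists P0, Q0; eauto.
Qed.

Lemma tau_step_parL P P' Q : tau_step P P' -> tau_step (PPar P Q) (PPar P' Q).
Proof.
  intros (P0 & Q0 & H1 & Hl & H2).
  exists (PPar P0 Q), (PPar Q0 Q); split; [| split]; auto using lts_parL.
Qed.

Lemma tau_step_in_out a B R : tau_step (PPar (PIn a B) (POut a R)) (inst B R).
Proof.
  exists (PPar (PIn a B) (POut a R)), (PPar (inst B R) PNil); split; [| split]; auto.
  eapply lts_comR; constructor.
Qed.

Lemma tau_step_in_out_inv a B b R Q :
  tau_step (PPar (PIn a B) (POut b R)) Q -> a = b /\ scong Q (inst B R).
Proof.
  intros H. destruct (tau_step_inv _ _ H) as (c & R' & B' & rest & Hp & HQ).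
  destruct (Permutation_length_2_inv Hp) as [E | E]; inversion E; subst.
  split; [reflexivity | eapply sc_trans; [apply HQ | apply sc_unit]].
Qed.

Definition tr_grab (t : term) (pi : stack) : proc :=
  PPar (PIn ch_hd (tr t)) (tr_stack pi).

Lemma tr_app_inst t1 t2 pi : exists B,
  tr (TApp t1 t2) = PIn ch_c B /\ inst B (tr_stack pi) = tr_config (t1, t2 :: pi).
Proof.
  eexists; split; [reflexivity |].
  unfold inst; simpl; rewrite !psubst_plift_cancel; reflexivity.
Qed.

Lemma tr_lam_inst t pi : exists B,
  tr (TLam t) = PIn ch_c B /\ inst B (tr_stack pi) = tr_grab t pi.
Proof.
  eexists; split; [reflexivity |].
  unfold inst; simpl; rewrite psubst_plift_cancel; reflexivity.
Qed.

Lemma tr_config_app_tau t1 t2 pi :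
  tau_step (tr_config (TApp t1 t2, pi)) (tr_config (t1, t2 :: pi)).
Proof.
  destruct (tr_app_inst t1 t2 pi) as (B & HB & <-).
  unfold tr_config; simpl fst; rewrite HB; apply tau_step_in_out.
Qed.

Lemma tr_config_lam_tau t pi : tau_step (tr_config (TLam t, pi)) (tr_grab t pi).
Proof.
  destruct (tr_lam_inst t pi) as (B & HB & <-).
  unfold tr_config; simpl fst; rewrite HB; apply tau_step_in_out.
Qed.

Lemma tr_grab_tau t s pi :
  tau_step (tr_grab t (s :: pi)) (tr_config (tsubst 0 s t, pi)).
Proof.
  eapply tau_step_scong; [apply sc_assoc | apply tau_step_parL, tau_step_in_out |].
  unfold tr_config; simpl; rewrite tr_tsubst; apply sc_refl.
Qed.

Lemma tr_config_tau_inv t pi Q : tau_step (tr_config (t, pi)) Q ->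
  (exists t1 t2, t = TApp t1 t2 /\ scong Q (tr_config (t1, t2 :: pi))) \/
  (exists t', t = TLam t' /\ scong Q (tr_grab t' pi)).
Proof.
  intros H; destruct t as [n | t1 t2 | t'].
  - destruct (tau_step_inv _ _ H) as (a & R & B & rest & Hp & _).
    destruct (Permutation_length_2_inv Hp) as [E | E]; discriminate E.
  - left; exists t1, t2; split; [reflexivity |].
    destruct (tr_app_inst t1 t2 pi) as (B & HB & <-).
    unfold tr_config in H; simpl fst in H; rewrite HB in H.
    apply tau_step_in_out_inv in H; apply H.
  - right; exists t'; split; [reflexivity |].
    destruct (tr_lam_inst t' pi) as (B & HB & <-).
    unfold tr_config in H; simpl fst in H; rewrite HB in H.
    apply tau_step_in_out_inv in H; apply H.
Qed.

Lemma tr_grab_tau_inv t pi Q : tau_step (tr_grab t pi) Q ->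
  exists s pi', pi = s :: pi' /\ scong Q (tr_config (tsubst 0 s t, pi')).
Proof.
  intros H; destruct pi as [| s pi].
  - apply tau_step_in_out_inv in H; discriminate (proj1 H).
  - exists s, pi; split; [reflexivity |].
    destruct (tau_step_inv _ _ H) as (a & R & B & rest & Hp & HQ).
    assert (Hi : In (PIn a B) (flat (tr_grab t (s :: pi))))
      by (rewrite Hp; right; left; reflexivity).
    assert (Ho : In (POut a R) (flat (tr_grab t (s :: pi))))
      by (rewrite Hp; left; reflexivity).
    simpl in Hi, Ho.
    destruct Hi as [Hi | [Hi | [Hi | []]]]; inversion Hi; subst.
    destruct Ho as [Ho | [Ho | [Ho | []]]]; inversion Ho; subst.
    assert (Hrest : Permutation rest [POut ch_c (tr_stack pi)]).
    { apply (Permutation_cons_inv (a := PIn ch_hd (tr t))),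
            (Permutation_cons_inv (a := POut ch_hd (tr s))).
      rewrite <- Hp; apply perm_swap. }
    eapply sc_trans; [apply HQ |].
    unfold tr_config; simpl; rewrite tr_tsubst.
    apply sc_par; [apply sc_refl |].
    eapply sc_trans; [apply par_list_perm, Hrest | apply sc_unit].
Qed.

Inductive tr_state : config -> proc -> Prop :=
| tr_state_config C : tr_state C (tr_config C)
| tr_state_grab t pi : tr_state (TLam t, pi) (tr_grab t pi).

Lemma tr_state_tau_step C X Q : tr_state C X -> tau_step X Q ->
  exists C' X', kam_star C C' /\ tr_state C' X' /\ scong Q X'.
Proof.
  destruct 1 as [[t pi] | t pi]; intros H.
  - destruct (tr_config_tau_inv _ _ _ H) as [(t1 & t2 & -> & HQ) | (t' & -> & HQ)].
    + exists (t1, t2 :: pi); eexists.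
      split; [apply rt_step, kam_push | split; [constructor | exact HQ]].
    + exists (TLam t', pi); eexists.
      split; [apply rt_refl | split; [constructor | exact HQ]].
  - destruct (tr_grab_tau_inv _ _ _ H) as (s & pi' & -> & HQ).
    exists (tsubst 0 s t, pi'); eexists.
    split; [apply rt_step, kam_grab | split; [constructor | exact HQ]].
Qed.

Definition tr_reachable (C : config) (P : proc) : Prop :=
  exists C' X, kam_star C C' /\ tr_state C' X /\ scong P X.

Lemma tr_reachable_tau_star C P Q :
  tau_star P Q -> tr_reachable C P -> tr_reachable C Q.
Proof.
  induction 1 as [P Q [HPQ | HPQ] | | ]; auto.
  - intros (C' & X & HC & HX & HP). exists C', X; split; [| split]; eauto.
  - intros (C' & X & HC & HX & HP).
    assert (HXQ : tau_step X Q)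
      by (eapply tau_step_scong; [apply sc_sym, HP | exact HPQ | apply sc_refl]).
    destruct (tr_state_tau_step _ _ _ HX HXQ) as (C'' & X' & HC' & HX' & HQ).
    exists C'', X'; split; [eapply rt_trans; eassumption | auto].
Qed.

Lemma kam_star_tau_star C C' : kam_star C C' -> tau_star (tr_config C) (tr_config C').
Proof.
  induction 1 as [C C' [t1 t2 pi | t s pi] | | ].
  - apply rt_step; right; apply tr_config_app_tau.
  - eapply rt_trans; apply rt_step; right; [apply tr_config_lam_tau | apply tr_grab_tau].
  - apply rt_refl.
  - eapply rt_trans; eassumption.
Qed.

Theorem theorem3p1 :
  forall C : config, closed_config C ->
    (forall C', kam_star C C' -> tau_star (tr_config C) (tr_config C')) /\
    (forall P, tau_star (tr_config C) P ->
       exists C', kam_star C C' /\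
         (scong P (tr_config C') \/
          (exists P', tau_step P P' /\ scong P' (tr_config C')) \/
          (exists t, C' = (TLam t, []) /\
                     scong P (PPar (PIn ch_hd (tr t)) (POut ch_b PNil))))).
Proof.
  intros C _; split; [apply kam_star_tau_star |].
  intros P H.
  assert (Hreach : tr_reachable C P).
  { apply (tr_reachable_tau_star _ _ _ H).
    exists C, (tr_config C); split; [apply rt_refl | split; constructor]. }
  destruct Hreach as (C' & X & HC & Hstate & HP).
  destruct Hstate as [C' | t [| s pi]].
  - exists C'; auto.
  - exists (TLam t, []); split; [assumption |].
    right; right; exists t; split; [reflexivity | exact HP].
  - exists (tsubst 0 s t, pi); split.
    + eapply rt_trans; [eassumption | apply rt_step, kam_grab].
    + right; left. eexists; split; [| apply sc_refl].
      eapply tau_step_scong; [exact HP | apply tr_grab_tau | apply sc_refl].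
Qed.
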